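(* Let $k\ge 2$ and $j\ge 0$, $n\ge 0$ be integers, and consider the random $k$-tree process. Suppose that in $G(j)$ a vertex $x$ has $A>0$ neighbors and is contained in $B$ many $k$-cliques. Conditional on this, the degree of $x$ in $G(n+j)$ is distributed as $$A+\frac{1}{k-1}\left(\operatorname{Urn}\left(B,\,kj+1-B,\,\begin{bmatrix}k&0\\1&k-1\end{bmatrix},\,n\right)-B\right).$$
   Context: Random $k$-tree process: $G(0)$ is a clique on $k$ vertices; for $t\ge1$, $G(t)$ is obtained from $G(t-1)$ by choosing a $k$-clique of $G(t-1)$ uniformly at random, creating a new vertex, and joining it to all vertices of the chosen clique ($G(t)$ has $kt+1$ many $k$-cliques). Generalized Pólya–Eggenberger urn: for nonnegative integers $\alpha,\beta,\gamma,\delta$, start with $W_0$ white and $B_0$ black balls; in each step a ball is drawn uniformly at random and returned; if it is white, $\delta$ white and $\gamma$ black balls are added; if it is black, $\beta$ white and $\alpha$ black balls are added. $\operatorname{Urn}\left(W_0,B_0,\begin{bmatrix}\alpha&\beta\\\gamma&\delta\end{bmatrix},n\right)$ denotes the number of white balls right after $n$ draws. *)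

From mathcomp Require Import all_boot all_order all_algebra.
Set Implicit Arguments. Unset Strict Implicit. Unset Printing Implicit Defensive.
Import Order.TTheory GRing.Theory Num.Theory.
Local Open Scope ring_scope.

(* A graph on vertex set {0,..,N-1} with adjacency relation adj. *)
Record graph := Graph { nverts : nat; adj : nat -> nat -> bool }.

Fixpoint ksubs (s : seq nat) (m : nat) : seq (seq nat) :=
  match s with
  | [::] => if m is 0 then [:: [::]] else [::]
  | x :: s' => if m is m'.+1 then map (cons x) (ksubs s' m') ++ ksubs s' m
               else [:: [::]]
  end.

Definition is_clique (G : graph) (C : seq nat) : bool :=
  all (fun u => all (fun v => (u == v) || adj G u v) C) C.

(* The k-cliques of G (each listed once, as a sorted list of k vertices). *)
Definition kcliques (k : nat) (G : graph) : seq (seq nat) :=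
  [seq C <- ksubs (iota 0 (nverts G)) k | is_clique G C].

Definition add_vertex (G : graph) (C : seq nat) : graph :=
  Graph (nverts G).+1
    (fun u v => [|| adj G u v, (u == nverts G) && (v \in C)
                  | (v == nverts G) && (u \in C)]).

Definition kclique_graph (k : nat) : graph :=
  Graph k (fun u v => [&& (u < k)%N, (v < k)%N & u != v]).

Definition degree (G : graph) (x : nat) : nat :=
  count (adj G x) (iota 0 (nverts G)).

Definition nb_cliques_containing (k : nat) (G : graph) (x : nat) : nat :=
  count (fun C => x \in C) (kcliques k G).

(* Probability that the trajectory (G(0), G(1), ..., G(n)) of the random
   k-tree process started from G satisfies P: at each step a k-clique
   of the current graph is chosen uniformly at random. *)
Fixpoint ktree_prob (k n : nat) (G : graph) (P : seq graph -> bool) : rat :=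
  match n with
  | 0 => (P [:: G])%:R
  | n'.+1 =>
      let cs := kcliques k G in
      (size cs)%:R^-1 *
      \sum_(C <- cs) ktree_prob k n' (add_vertex G C) (fun tr => P (G :: tr))
  end.

Definition Pr_ktree (k T : nat) (P : seq graph -> bool) : rat :=
  ktree_prob k T (kclique_graph k) P.

(* Generalized Polya-Eggenberger urn with replacement matrix
   [[alpha, beta]; [gamma, delta]]: probability that the number of white
   balls after n draws, starting from W white and B black, satisfies P. *)
Fixpoint urn_prob (alpha beta gamma delta : nat) (n W B : nat)
    (P : nat -> bool) : rat :=
  match n with
  | 0 => (P W)%:R
  | n'.+1 =>
      (W%:R / (W + B)%:R) * urn_prob alpha beta gamma delta n' (W + delta) (B + gamma) P
    + (B%:R / (W + B)%:R) * urn_prob alpha beta gamma delta n' (W + beta) (B + alpha) P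
  end.

From mathcomp Require Import all_boot all_order all_algebra.
From mathcomp Require Import zify ring.
Import Order.TTheory GRing.Theory Num.Theory.
Set Implicit Arguments. Unset Strict Implicit. Unset Printing Implicit Defensive.

(* Attaching a new vertex to a k-clique C adds k new k-cliques. If x is in C,
   the degree of x grows by 1 and the number of k-cliques containing x grows
   by k - 1; otherwise both stay put. So, among the k t + 1 cliques of G(t),
   those containing x behave exactly like the white balls of the urn
   [[k, 0], [1, k - 1]], and the degree of x is A + (W - B) / (k - 1) where W is
   their number. Since the step taken from G(j) depends on the past only
   through G(j), conditioning on the state at time j restarts this urn from
   B white balls among k j + 1. *)

Lemma ksubs0 s : ksubs s 0 = [:: [::]].
Proof. by case: s. Qed.

Lemma mem_ksubs s m S : S \in ksubs s m -> subseq S s && (size S == m).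
Proof.
elim: s m S => [|y s IHs] [|m] S.
- by rewrite ksubs0 inE => /eqP->.
- by rewrite in_nil.
- by rewrite ksubs0 inE => /eqP->; rewrite sub0seq.
rewrite [ksubs _ _]/= mem_cat.
case/orP=> [/mapP[S' /IHs /andP[subS' /eqP <-] ->]|/IHs /andP[subS ->]].
  by rewrite /= !eqxx subS'.
by rewrite (subseq_trans subS (subseq_cons s y)).
Qed.

Lemma count_all_ksubs (a : pred nat) s m :
  count (all a) (ksubs s m) = 'C(count a s, m).
Proof.
elim: s m => [|y s IHs] [|m] //=; rewrite ?ksubs0 ?bin0 //.
rewrite count_cat count_map (eq_count (a2 := fun S => a y && all a S)) //.
case: (a y); rewrite /= ?IHs; first by rewrite binS addnC.
by rewrite (eq_count (a2 := pred0)) // count_pred0.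
Qed.

Lemma perm_ksubs_rcons s y m :
  perm_eq (ksubs (rcons s y) m.+1) (ksubs s m.+1 ++ map (rcons^~ y) (ksubs s m)).
Proof.
elim: s m => [|z s IHs] m; first by case: m.
case: m => [|m].
  have := IHs 0%N; rewrite /= !ksubs0 /= => perm_s.
  by rewrite -cat1s -(cat1s [:: z]) perm_cat2l.
rewrite [ksubs (rcons _ _) _]/= (perm_trans (perm_cat (perm_map _ (IHs m)) (IHs m.+1))) //.
rewrite map_cat [ksubs (z :: s) m.+1]/= map_cat -!map_comp.
rewrite (@eq_map _ _ ((rcons^~ y) \o cons z) (cons z \o (rcons^~ y))) //.
by rewrite -!catA perm_cat2l perm_catCA.
Qed.

Lemma count_ksubs_mem (a : pred nat) s m x : uniq s -> x \in s -> a x ->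
  count (fun S => all a S && (x \in S)) (ksubs s m)
  = 'C(count a s, m) - 'C((count a s).-1, m).
Proof.
move=> uniq_s s_x a_x.
have count_a : count a s = (count (predD1 a x) s).+1.
  rewrite -size_filter -(count_predC (pred1 x)) count_uniq_mem ?filter_uniq //.
  by rewrite mem_filter a_x s_x count_filter /= add1n.
have := count_predC (fun S => x \in S) (filter (all a) (ksubs s m)).
rewrite size_filter !count_filter count_all_ksubs count_a /= -count_all_ksubs => <-.
rewrite (eq_count (a1 := predI (predC _) _) (a2 := all (predD1 a x))); last first.
  by move=> S; rewrite /= all_predI all_predC has_pred1 andbC.
by rewrite addnK; apply: eq_count => S; rewrite /= andbC.
Qed.

Lemma count_mem_iota (C : seq nat) N : uniq C -> all (fun u => u < N) C ->
  count (mem C) (iota 0 N) = size C.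
Proof.
move=> uniq_C /allP C_lt; rewrite -size_filter; apply/perm_size/uniq_perm.
- exact/filter_uniq/iota_uniq.
- exact: uniq_C.
by move=> u; rewrite mem_filter mem_iota andb_idr // => /C_lt.
Qed.

Lemma all_lt_ksubs_iota N m S : S \in ksubs (iota 0 N) m -> all (fun u => u < N) S.
Proof.
by case/mem_ksubs/andP=> /mem_subseq sub_S _; apply/allP=> u /sub_S; rewrite mem_iota.
Qed.

Lemma mem_kcliques k G C : C \in kcliques k G ->
  [/\ uniq C, size C = k, all (fun u => u < nverts G) C & is_clique G C].
Proof.
rewrite mem_filter => /andP[clique_C ksubs_C].
have /andP[/subseq_uniq uniq_C /eqP size_C] := mem_ksubs ksubs_C.
by split=> //; [exact: uniq_C (iota_uniq _ _) | exact: all_lt_ksubs_iota ksubs_C].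
Qed.

Definition adj_bounded (G : graph) : Prop :=
  forall u v, adj G u v -> (u < nverts G) && (v < nverts G).

Lemma adj_bounded_kclique_graph k : adj_bounded (kclique_graph k).
Proof. by move=> u v /and3P[-> ->]. Qed.

Lemma adj_bounded_add_vertex G C :
  adj_bounded G -> all (fun u => u < nverts G) C -> adj_bounded (add_vertex G C).
Proof.
move=> bG /allP C_lt u v /= /orP[/bG /andP[lt_u lt_v]|/orP[]/andP[/eqP-> /C_lt lt]].
- by rewrite !ltnS ltnW // ltnW.
- by rewrite ltnSn ltnS ltnW.
- by rewrite ltnSn ltnS ltnW.
Qed.

Lemma is_clique_add_vertex_old G C S : all (fun u => u < nverts G) S ->
  is_clique (add_vertex G C) S = is_clique G S.
Proof.
move=> /allP S_lt; apply: eq_in_all => u /S_lt lt_u; apply: eq_in_all => v /S_lt lt_v.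
by rewrite /= (ltn_eqF lt_u) (ltn_eqF lt_v) /= !orbF.
Qed.

Lemma is_clique_add_vertex_new G C S : adj_bounded G -> is_clique G C ->
  all (fun u => u < nverts G) S ->
  is_clique (add_vertex G C) (rcons S (nverts G)) = all (mem C) S.
Proof.
move=> bG /allP clique_C /allP S_lt; apply/allP/allP => [clique_S u S_u|C_S].
  have u_in : u \in rcons S (nverts G) by rewrite mem_rcons inE S_u orbT.
  have /allP/(_ (nverts G)) := clique_S u u_in.
  rewrite mem_rcons inE eqxx /= ltn_eqF ?S_lt // eqxx /= => /(_ isT) /orP[/bG|//].
  by rewrite ltnn andbF.
have {}C_S : {subset S <= C} by move=> u /C_S.
move=> u; rewrite mem_rcons inE => /predU1P[->|/C_S C_u];
  apply/allP => v; rewrite mem_rcons inE => /predU1P[->|/C_S C_v] /=.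
- by rewrite eqxx.
- by rewrite eqxx C_v !orbT.
- by rewrite eqxx C_u !orbT.
- by have /allP/(_ v C_v)/orP[->|->] := clique_C u C_u; rewrite ?orbT.
Qed.

Lemma count_kcliques_add_vertex k G C (p : pred (seq nat)) :
  adj_bounded G -> is_clique G C ->
  count p (kcliques k.+1 (add_vertex G C)) =
  count p (kcliques k.+1 G) +
  count (fun S => all (mem C) S && p (rcons S (nverts G))) (ksubs (iota 0 (nverts G)) k).
Proof.
move=> bG clique_C; rewrite /kcliques !count_filter [nverts _]/=.
rewrite -addn1 iotaD cats1 (permP (perm_ksubs_rcons _ _ _)) count_cat count_map.
congr (_ + _); apply: eq_in_count => S /all_lt_ksubs_iota S_lt /=.
  by rewrite is_clique_add_vertex_old.
by rewrite is_clique_add_vertex_new // andbC.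
Qed.

Lemma size_kcliques_add_vertex k G C : adj_bounded G -> C \in kcliques k.+1 G ->
  size (kcliques k.+1 (add_vertex G C)) = size (kcliques k.+1 G) + k.+1.
Proof.
move=> bG /mem_kcliques[uniq_C size_C C_lt clique_C].
rewrite -!count_predT count_kcliques_add_vertex //.
rewrite (eq_count (a2 := all (mem C))) => [|S]; last by rewrite andbT.
by rewrite count_all_ksubs count_mem_iota // size_C binSn.
Qed.

Lemma nb_cliques_containing_add_vertex k G C x :
  adj_bounded G -> C \in kcliques k.+1 G -> x < nverts G ->
  nb_cliques_containing k.+1 (add_vertex G C) x =
  nb_cliques_containing k.+1 G x + (x \in C) * k.
Proof.
move=> bG kC lt_x; have [uniq_C size_C C_lt clique_C] := mem_kcliques kC.
rewrite /nb_cliques_containing count_kcliques_add_vertex //; congr (_ + _).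
rewrite (eq_count (a2 := fun S => all (mem C) S && (x \in S))) => [|S]; last first.
  by rewrite mem_rcons inE ltn_eqF.
have [C_x|/negbTE C_x] := boolP (x \in C); last first.
  apply/eqP; rewrite mul0n -leqn0 leqNgt -has_count; apply/hasPn => S _.
  by apply/negP => /andP[/allP S_C /S_C]; rewrite inE C_x.
rewrite count_ksubs_mem ?iota_uniq ?mem_iota //= count_mem_iota // size_C.
by rewrite binSn binn mul1n subn1.
Qed.

Lemma degree_add_vertex G C x : adj_bounded G -> x < nverts G ->
  degree (add_vertex G C) x = degree G x + (x \in C).
Proof.
move=> bG lt_x; rewrite /degree [nverts _]/= -addn1 iotaD count_cat /= addn0.
have adj_x_new : adj G x (nverts G) = false.
  by apply/negP => /bG; rewrite ltnn andbF.
rewrite adj_x_new ltn_eqF // eqxx; congr (_ + _).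
apply: eq_in_count => v; rewrite mem_iota => /andP[_ lt_v].
by rewrite /= !ltn_eqF //= ?orbF.
Qed.

Lemma size_kcliques_kclique_graph k : size (kcliques k (kclique_graph k)) = 1.
Proof.
rewrite /kcliques size_filter (eq_in_count (a2 := all predT)).
  by rewrite count_all_ksubs count_predT size_iota binn.
move=> S /all_lt_ksubs_iota /allP S_lt; rewrite all_predT.
apply/allP => u S_u; apply/allP => v S_v /=.
by rewrite !S_lt //=; case: eqP.
Qed.

Local Open Scope ring_scope.

Lemma eq_ktree_prob k n G (P Q : seq graph -> bool) :
  (forall s, size s = n -> P (G :: s) = Q (G :: s)) ->
  ktree_prob k n G P = ktree_prob k n G Q.
Proof.
elim: n G P Q => [|n IHn] G P Q eqPQ /=; first by rewrite eqPQ.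
congr (_ * _); apply: eq_bigr => C _; apply: IHn => s size_s.
by rewrite eqPQ //= size_s.
Qed.

Section KtreeMarkov.

Variables (k : nat) (Inv : nat -> graph -> Prop).
Hypothesis Inv_add_vertex :
  forall t G C, Inv t G -> C \in kcliques k G -> Inv t.+1 (add_vertex G C).
Hypothesis Inv_kcliques : forall t G, Inv t G -> size (kcliques k G) != 0%N.

Lemma ktree_prob_cst n t G (b : bool) : Inv t G -> ktree_prob k n G (fun _ => b) = b%:R.
Proof.
elim: n t G => [|n IHn] t G invG //=.
rewrite (eq_big_seq (fun _ => b%:R)) => [|C kC]; last exact: IHn (Inv_add_vertex invG kC).
rewrite big_const_seq iter_addr_0 count_predT -(mulr_natr (b%:R : rat)) mulrCA mulVf ?mulr1 //.
by rewrite pnatr_eq0 (Inv_kcliques invG).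
Qed.

Lemma ktree_prob_markov j n t G (e f : pred graph) c :
  Inv t G ->
  (forall G', Inv (t + j) G' -> e G' -> ktree_prob k n G' (fun tr => f (last G' tr)) = c) ->
  ktree_prob k (j + n) G (fun tr => e (nth G tr j) && f (nth G tr (j + n)))
  = c * ktree_prob k (j + n) G (fun tr => e (nth G tr j)).
Proof.
elim: j t G => [|j IHj] t G invG cond_f.
  rewrite !add0n (@eq_ktree_prob k _ _ _ (fun tr => e G && f (last G tr))); last first.
    by move=> s <-; rewrite (last_nth G).
  rewrite [in RHS](@eq_ktree_prob k _ _ _ (fun _ => e G)) //.
  have [eG|_] := boolP (e G); rewrite /= !(ktree_prob_cst _ _ invG) ?mulr0 ?mulr1 //.
  by apply: cond_f; rewrite ?addn0.
rewrite addSn /= mulrCA; congr (_ * _); rewrite mulr_sumr; apply: eq_big_seq => C kC.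
set G' := add_vertex G C.
have nth_G' s : size s = (j + n)%N -> nth G (G' :: s) j = nth G' (G' :: s) j.
  by move=> size_s; apply: set_nth_default; rewrite /= size_s ltnS leq_addr.
rewrite (@eq_ktree_prob k _ _ _ (fun tr => e (nth G' tr j) && f (nth G' tr (j + n)))); last first.
  move=> s size_s; rewrite nth_G' //; congr (_ && f _).
  by apply: set_nth_default; rewrite /= size_s.
rewrite [in RHS](@eq_ktree_prob k _ _ _ (fun tr => e (nth G' tr j))) => [|s size_s]; last first.
  by rewrite nth_G'.
apply: (IHj t.+1) => [|G'' invG'']; first exact: Inv_add_vertex invG kC.
by apply: cond_f; rewrite -addSnnS.
Qed.

End KtreeMarkov.

(* An invariant of the graphs G(t), not a characterisation of them. *)
Definition ktree_state (k t : nat) (G : graph) : Prop :=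
  adj_bounded G /\ size (kcliques k G) = (k * t).+1.

Lemma ktree_state_kclique_graph k : ktree_state k 0 (kclique_graph k).
Proof.
by split; [exact: adj_bounded_kclique_graph | rewrite muln0 size_kcliques_kclique_graph].
Qed.

Lemma ktree_state_kcliques k t G : ktree_state k t G -> size (kcliques k G) != 0%N.
Proof. by case=> _ ->. Qed.

Lemma ktree_state_add_vertex k t G C : ktree_state k.+1 t G -> C \in kcliques k.+1 G ->
  ktree_state k.+1 t.+1 (add_vertex G C).
Proof.
move=> [bG size_G] kC; have [_ _ C_lt _] := mem_kcliques kC.
split; first exact: adj_bounded_add_vertex.
by rewrite size_kcliques_add_vertex // size_G; lia.
Qed.

(* [Q] reads off the degree of [x] what [P] reads off the number of cliques
   containing [x]: a step raises the former by 1 exactly when it raises the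
   latter by [k]. *)
Lemma ktree_prob_degree_urn k n G x (Q P : pred nat) :
  adj_bounded G -> (x < nverts G)%N ->
  (forall m, Q (degree G x + m)%N = P (nb_cliques_containing k.+1 G x + m * k)%N) ->
  ktree_prob k.+1 n G (fun tr => Q (degree (last G tr) x)) =
  urn_prob k.+1 0 1 k n (nb_cliques_containing k.+1 G x)
    (size (kcliques k.+1 G) - nb_cliques_containing k.+1 G x) P.
Proof.
elim: n G Q P => [|n IHn] G Q P bG lt_x QP /=.
  by rewrite -[degree G x]addn0 QP mul0n addn0.
set W := nb_cliques_containing k.+1 G x; set T := size (kcliques k.+1 G).
have le_WT : (W <= T)%N := count_size _ _.
pose u (b : bool) := urn_prob k.+1 0 1 k n (W + b * k) (T + k.+1 - (W + b * k)) P.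
rewrite (eq_big_seq (fun C : seq nat => u (x \in C))) => [|C kC]; last first.
  have [_ _ C_lt _] := mem_kcliques kC.
  rewrite (@eq_ktree_prob _ _ _ _ (fun tr => Q (degree (last (add_vertex G C) tr) x))) //.
  rewrite (IHn _ _ P) ?nb_cliques_containing_add_vertex ?size_kcliques_add_vertex //.
  - exact: adj_bounded_add_vertex.
  - by rewrite /= ltnS ltnW.
  move=> m; rewrite degree_add_vertex // -addnA QP -/W.
  by case: (x \in C) => /=; congr P; lia.
rewrite (bigID (fun C => x \in C)) /=.
rewrite (eq_bigr (fun _ => u true)) => [|C ->] //.
rewrite [X in _ + X](eq_bigr (fun _ => u false)) => [|C /negbTE ->] //.
rewrite !big_const_seq !iter_addr_0 -/W.
have -> : count (fun C => x \notin C) (kcliques k.+1 G) = (T - W)%N.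
  by rewrite /T -(count_predC (fun C => x \in C)) addKn.
rewrite (subnKC le_WT) -/(nb_cliques_containing k.+1 G x) -/W.
have -> : u true = urn_prob k.+1 0 1 k n (W + k) (T - W + 1) P.
  by rewrite /u /=; congr urn_prob; lia.
have -> : u false = urn_prob k.+1 0 1 k n (W + 0) (T - W + k.+1) P.
  by rewrite /u /=; congr urn_prob; lia.
ring.
Qed.

Theorem proposition3 (k j n x A B d : nat) :
  (2 <= k)%N -> (0 < A)%N ->
  let E := fun tr : seq graph =>
    (degree (nth (kclique_graph k) tr j) x == A) &&
    (nb_cliques_containing k (nth (kclique_graph k) tr j) x == B) in
  let F := fun tr : seq graph =>
    degree (nth (kclique_graph k) tr (n + j)) x == d in
  0 < Pr_ktree k (n + j) E ->
  Pr_ktree k (n + j) (fun tr => E tr && F tr) / Pr_ktree k (n + j) E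
  = urn_prob k 0 1 (k - 1)%N n B (k * j + 1 - B)%N
      (fun w => A%:Q + (w%:Q - B%:Q) / (k - 1)%N%:Q == d%:Q).
Proof.
case: k => [|k] // k_ge2 A_gt0 E F PrE_gt0; rewrite subn1 /=.
set P := fun w : nat => _ == d%:Q.
pose e G := (degree G x == A) && (nb_cliques_containing k.+1 G x == B).
pose f G := degree G x == d.
have urn_at_j G : ktree_state k.+1 j G -> e G ->
    ktree_prob k.+1 n G (fun tr => f (last G tr)) = urn_prob k.+1 0 1 k n B (k.+1 * j + 1 - B) P.
  case=> bG size_G /andP[/eqP deg_A /eqP nb_B].
  rewrite /f (@ktree_prob_degree_urn k n G x (fun w => w == d) P) //.
  - by rewrite nb_B size_G addn1.
  - by move: A_gt0; rewrite -deg_A -has_count => /hasP[v _ /bG /andP[]].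
  move=> m; rewrite deg_A nb_B /P -!pmulrn natrD natrM addrAC subrr add0r mulfK.
    by rewrite -natrD eqr_nat.
  by rewrite pnatr_eq0 -lt0n.
rewrite /Pr_ktree {}/E {}/F (addnC n j) in PrE_gt0 *.
rewrite (ktree_prob_markov (@ktree_state_add_vertex k) (@ktree_state_kcliques _)
  (ktree_state_kclique_graph _) urn_at_j).
by rewrite mulfK // lt0r_neq0.
Qed.
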